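(* For every $g\ge 1$, every nice path of $\mathcal{H}_g$ from $v_1$ to $v_2$ is oddly oriented relative to $\mathcal{H}_g^e$.
   Context: The graphs $\mathcal{H}_g$ with hubs $v_1,v_2,v_3,v_4$ and orientations $\mathcal{H}_g^e$ are defined recursively. $\mathcal{H}_1$ is the 4-cycle with edges $\{v_1,v_2\},\{v_1,v_3\},\{v_2,v_4\},\{v_3,v_4\}$, oriented $v_1\to v_2$, $v_1\to v_3$, $v_4\to v_2$, $v_3\to v_4$. For $g>1$, take four disjoint copies $\mathcal{H}_{g-1}^{(i)}$, $i=1,\dots,4$, of $\mathcal{H}_{g-1}$, each oriented as a copy of $\mathcal{H}_{g-1}^e$, with hubs $v_k^{(i)}$; identify $v_1^{(1)},v_1^{(4)}$ as $v_1$, $v_2^{(2)},v_1^{(3)}$ as $v_4$, $v_2^{(1)},v_1^{(2)}$ as $v_3$, and $v_2^{(3)},v_2^{(4)}$ as $v_2$; $\mathcal{H}_g^e$ is the union of the copies' orientations. Paths are elementary (no repeated vertices). A path $P$ of a graph $G$ is nice if the subgraph of $G$ induced by the vertices not on $P$ has a perfect matching. A path from $u$ to $v$ is oddly oriented if, traversing it from $u$ to $v$, an odd number of its edges are oriented in the direction of traversal. *)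

From mathcomp Require Import all_boot.
Set Implicit Arguments. Unset Strict Implicit. Unset Printing Implicit Defensive.

(* A graph with oriented edges, on vertices labelled by naturals.
   gbound : all vertex labels are < gbound;
   gverts : the vertex set;
   garcs  : the oriented edges, (u, v) meaning u -> v. *)
Record ograph := OGraph { gbound : nat; gverts : seq nat; garcs : seq (nat * nat) }.

Definition v1 := 0. Definition v2 := 1. Definition v3 := 2. Definition v4 := 3.

Definition H1 : ograph :=
  OGraph 4 [:: 0; 1; 2; 3] [:: (v1, v2); (v1, v3); (v4, v2); (v3, v4)].

(* Relabelling of copy i (i = 0..3, standing for copies 1..4) of a graph of bound B:
   hub v1 of the copy goes to a, hub v2 to b, any other vertex x to 4 + i*B + x
   (fresh, pairwise distinct across copies). *)
Definition relab (B i a b x : nat) : nat :=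
  if x == v1 then a else if x == v2 then b else 4 + i * B + x.

(* identifications: copy1: v1->v1, v2->v3; copy2: v1->v3, v2->v4;
                    copy3: v1->v4, v2->v2; copy4: v1->v1, v2->v2 *)
Definition copy_hubs : seq (nat * (nat * nat)) :=
  [:: (0, (v1, v3)); (1, (v3, v4)); (2, (v4, v2)); (3, (v1, v2))].

Definition Hstep (G : ograph) : ograph :=
  let B := gbound G in
  let f c x := relab B c.1 c.2.1 c.2.2 x in
  OGraph (4 + 4 * B)
    (undup ([:: v1; v2; v3; v4] ++
            flatten [seq [seq f c x | x <- gverts G] | c <- copy_hubs]))
    (flatten [seq [seq (f c e.1, f c e.2) | e <- garcs G] | c <- copy_hubs]).

(* H g = H_g^e for g >= 1 (H 0 is an unused junk value equal to H_1). *)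
Fixpoint H (g : nat) : ograph :=
  match g with
  | 0 | 1 => H1
  | g'.+1 => Hstep (H g')
  end.

Definition adj (G : ograph) (u v : nat) : bool :=
  ((u, v) \in garcs G) || ((v, u) \in garcs G).

Definition is_path (G : ograph) (p : seq nat) : bool :=
  [&& p != [::], uniq p, all (fun v => v \in gverts G) p
    & path (adj G) (head 0 p) (behead p)].

Definition perfect_matching_of (G : ograph) (S : seq nat) (M : seq (nat * nat)) : Prop :=
  (forall e, e \in M -> [/\ e.1 != e.2, adj G e.1 e.2, e.1 \in S & e.2 \in S]) /\
  (forall v, v \in S -> count (fun e => (e.1 == v) || (e.2 == v)) M = 1).

Definition nice (G : ograph) (p : seq nat) : Prop :=
  exists M, perfect_matching_of G [seq v <- gverts G | v \notin p] M.

Definition oddly_oriented (G : ograph) (p : seq nat) : bool :=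
  odd (count (fun e => e \in garcs G) (zip p (behead p))).

From mathcomp Require Import all_boot zify.
Set Implicit Arguments. Unset Strict Implicit. Unset Printing Implicit Defensive.

(* H_(g+1) is four copies of H_g glued at the hubs along the 4-cycle
   v1 -(copy 1)- v3 -(copy 2)- v4 -(copy 3)- v2 -(copy 4)- v1, each copy running from its
   own v1 to its own v2.  A vertex of a copy other than its hubs is adjacent only to
   vertices of that copy, so a path from v1 to v2 splits at the hubs into segments,
   each inside one copy between the two hubs of that copy.  Since the path never
   revisits a hub, it is either copy 4 alone or copies 1, 2, 3 in turn, always traversed
   from the copy's v1 to its v2.  On a copy used by the path, the vertices off the path
   are matched among themselves, so each segment is a nice v1-v2 path of H_g, oddly
   oriented by induction; an odd number of odd segments gives an odd total. *)

(* [hub1 i] and [hub2 i] are the hubs of H_(g+1) onto which the hubs v1 and v2 of the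
   copy i are glued (see [copy_hubs]); [Hstep_verts] and [Hstep_arcs] check the match. *)
Definition hub1 (i : nat) : nat := if i is 1 then 2 else if i is 2 then 3 else 0.
Definition hub2 (i : nat) : nat := if i is 0 then 2 else if i is 1 then 3 else 1.

Definition copy_vertex (B i x : nat) : nat := relab B i (hub1 i) (hub2 i) x.

Definition uncopy (B i u : nat) : nat :=
  if u == hub1 i then 0 else if u == hub2 i then 1 else u - (4 + i * B).

Lemma copy_vertex0 B i : copy_vertex B i 0 = hub1 i. Proof. by []. Qed.
Lemma copy_vertex1 B i : copy_vertex B i 1 = hub2 i. Proof. by []. Qed.

Lemma copy_vertex_internal B i x : 1 < x -> copy_vertex B i x = 4 + i * B + x.
Proof. by case: x => [|[|x]]. Qed.

Lemma hub1_lt4 i : hub1 i < 4. Proof. by case: i => [|[|[|i]]]. Qed.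
Lemma hub2_lt4 i : hub2 i < 4. Proof. by case: i => [|[|[|i]]]. Qed.

Lemma copy_vertex_lt4 B i x : (copy_vertex B i x < 4) = (x < 2).
Proof. by case: x => [|[|x]]; rewrite ?copy_vertex0 ?hub1_lt4 ?copy_vertex1 ?hub2_lt4. Qed.

Lemma copy_vertexK B i : i < 4 -> cancel (copy_vertex B i) (uncopy B i).
Proof.
move=> i4 [|[|x]]; rewrite /uncopy ?copy_vertex0 ?copy_vertex1 ?eqxx //.
  by case: i i4 => [|[|[|[|]]]].
have x4 : 4 <= copy_vertex B i x.+2 by rewrite leqNgt copy_vertex_lt4.
have /negbTE-> : copy_vertex B i x.+2 != hub1 i by have := hub1_lt4 i; lia.
have /negbTE-> : copy_vertex B i x.+2 != hub2 i by have := hub2_lt4 i; lia.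
by rewrite copy_vertex_internal //; lia.
Qed.

Lemma copy_vertex_inj B i : i < 4 -> injective (copy_vertex B i).
Proof. by move/copy_vertexK/can_inj. Qed.

Lemma copy_vertex_internal_inj B i j x y : 1 < x -> x < B -> y < B ->
  copy_vertex B i x = copy_vertex B j y -> i = j.
Proof.
move=> x1 xB yB Exy.
have y1 : 1 < y.
  have := copy_vertex_lt4 B i x; rewrite Exy copy_vertex_lt4 (ltnNge x) x1.
  by move=> /negbT; rewrite -leqNgt.
move: Exy; rewrite !copy_vertex_internal // => Exy.
have {}Exy : i * B + x = j * B + y by lia.
have divB k z : z < B -> (k * B + z) %/ B = k.
  by move=> zB; rewrite divnMDl ?divn_small ?addn0 //; lia.
by rewrite -(divB i x) // Exy divB.
Qed.

Lemma copy_vertex_bound B i x : i < 4 -> x < B -> copy_vertex B i x < 4 + 4 * B.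
Proof.
move=> i4 xB; case: (ltnP 1 x) => [x1 | x1].
  rewrite copy_vertex_internal //; have : i * B <= 3 * B by rewrite leq_mul2r; lia.
  lia.
have : copy_vertex B i x < 4 by rewrite copy_vertex_lt4.
lia.
Qed.

Lemma copy_vertex_pair_inj B i j x y x' y' : i < 4 -> j < 4 ->
  x < B -> y < B -> x' < B -> y' < B -> x != y ->
  copy_vertex B i x = copy_vertex B j x' -> copy_vertex B i y = copy_vertex B j y' ->
  i = j.
Proof.
move=> i4 j4 xB yB x'B y'B xy Ex Ey.
case: (ltnP 1 x) => [x1 | x1]; first exact: copy_vertex_internal_inj Ex.
case: (ltnP 1 y) => [y1 | y1]; first exact: copy_vertex_internal_inj Ey.
have x'2 : x' < 2 by rewrite -(copy_vertex_lt4 B j) -Ex copy_vertex_lt4.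
have y'2 : y' < 2 by rewrite -(copy_vertex_lt4 B j) -Ey copy_vertex_lt4.
move: xy Ex Ey; case: x x1 {xB} => [|[|//]] _; case: y y1 {yB} => [|[|//]] _ //= _;
case: x' x'2 {x'B} => [|[|//]] _; case: y' y'2 {y'B} => [|[|//]] _;
by case: i i4 => [|[|[|[|//]]]] _; case: j j4 => [|[|[|[|//]]]].
Qed.

Lemma copy_hub_pair B i x y : x < 2 -> y < 2 ->
  copy_vertex B i x != copy_vertex B i y ->
  (copy_vertex B i x, copy_vertex B i y) = (hub1 i, hub2 i) \/
  (copy_vertex B i x, copy_vertex B i y) = (hub2 i, hub1 i).
Proof.
by case: x => [|[|//]] _; case: y => [|[|//]] _; rewrite ?eqxx //; [left | right].
Qed.

Lemma Hstep_verts G : gverts (Hstep G) = undup ([:: 0; 1; 2; 3] ++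
  [seq copy_vertex (gbound G) i x | i <- iota 0 4, x <- gverts G]).
Proof. by []. Qed.

Lemma Hstep_arcs G : garcs (Hstep G) =
  [seq (copy_vertex (gbound G) i e.1, copy_vertex (gbound G) i e.2)
     | i <- iota 0 4, e <- garcs G].
Proof. by []. Qed.

Lemma split_find T (a : pred T) s : has a s ->
  exists s1 x s2, [/\ s = s1 ++ x :: s2, ~~ has a s1 & a x].
Proof.
elim: s => //= y s IH; case: (boolP (a y)) => [ay _ | nay /IH[s1 [x [s2 [-> ns1 ax]]]]].
  by exists [::], y, s.
by exists (y :: s1), x, s2; rewrite /= (negbTE nay).
Qed.

Lemma uniq_last_nil (T : eqType) (x h : T) s t :
  uniq (s ++ h :: t) -> last x (s ++ h :: t) = h -> t = [::].
Proof.
case: t => // y t; rewrite cat_uniq last_cat /= => /and3P[_ _ /andP[ht _]] lt.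
by move: ht; rewrite -lt mem_last.
Qed.

Definition forward_arcs (G : ograph) (p : seq nat) : nat :=
  count (fun e => e \in garcs G) (zip p (behead p)).

Lemma forward_arcs_cons G x y q :
  forward_arcs G [:: x, y & q] = ((x, y) \in garcs G) + forward_arcs G (y :: q).
Proof. by []. Qed.

Lemma forward_arcs_cat G x s h t : forward_arcs G (x :: s ++ h :: t) =
  forward_arcs G (x :: rcons s h) + forward_arcs G (h :: t).
Proof.
elim: s x => [|y s IH] x; first by rewrite /= !forward_arcs_cons addn0.
by rewrite /= !forward_arcs_cons -/cat IH addnA.
Qed.

Lemma is_path_infix G s1 s2 s3 : s2 != [::] -> is_path G (s1 ++ s2 ++ s3) -> is_path G s2.
Proof.
case: s2 => // x s2 _ /and4P[_ U A P]; apply/and4P; split => //.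
- by move: U; rewrite !cat_uniq => /and3P[_ _ /and3P[]].
- by move: A; rewrite !all_cat => /and3P[].
case: s1 {U A} P => [|y s1] /=; first by rewrite cat_path => /andP[].
by rewrite cat_path /= cat_path => /and3P[_ _ /andP[]].
Qed.

Definition nice_paths_oddly_oriented (G : ograph) : Prop :=
  forall p, is_path G p -> head 0 p = v1 -> last 0 p = v2 -> nice G p -> oddly_oriented G p.

Definition wf_graph (G : ograph) : Prop :=
  [/\ {in gverts G, forall x, x < gbound G},
      {in garcs G, forall e, (e.1 \in gverts G) && (e.2 \in gverts G)},
      0 \in gverts G & 1 \in gverts G].

Definition internal (G : ograph) (x : nat) : bool := (x \in gverts G) && (1 < x).

Lemma adj_sym G : symmetric (adj G).
Proof. by move=> u w; rewrite /adj orbC. Qed.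

Section HstepStructure.

Variable G : ograph.
Hypothesis wfG : wf_graph G.

Local Notation B := (gbound G).
Local Notation cv := (copy_vertex B).

Lemma wf_vert_bound x : x \in gverts G -> x < B.
Proof. by case: wfG => + _ _ _; apply. Qed.

Lemma wf_arc_ends e : e \in garcs G -> (e.1 \in gverts G) && (e.2 \in gverts G).
Proof. by case: wfG => _ + _ _; apply. Qed.

Lemma Hstep_vertsP u : u \in gverts (Hstep G) ->
  u < 4 \/ exists2 i, i < 4 & exists2 x, x \in gverts G & u = cv i x.
Proof.
rewrite Hstep_verts mem_undup mem_cat => /orP[|/allpairsP[[i x] [i4 xG ->]]].
  by rewrite !inE => /or4P[]/eqP->; left.
by rewrite mem_iota in i4; right; exists i => //; exists x.
Qed.

Lemma hub_in_Hstep u : u < 4 -> u \in gverts (Hstep G).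
Proof. by rewrite Hstep_verts mem_undup; case: u => [|[|[|[|]]]]. Qed.

Lemma copy_vertex_in_Hstep i x : i < 4 -> x \in gverts G -> cv i x \in gverts (Hstep G).
Proof.
move=> i4 xG; rewrite Hstep_verts mem_undup mem_cat; apply/orP; right.
by apply/allpairsP; exists (i, x); split; rewrite ?mem_iota.
Qed.

Lemma Hstep_arcsP u w : (u, w) \in garcs (Hstep G) ->
  exists2 i, i < 4 & exists2 e, e \in garcs G & (u, w) = (cv i e.1, cv i e.2).
Proof.
rewrite Hstep_arcs => /allpairsP[[i e] [i4 eG ->]].
by rewrite mem_iota in i4; exists i => //; exists e.
Qed.

Lemma copy_arc_in_Hstep i e : i < 4 -> e \in garcs G ->
  (cv i e.1, cv i e.2) \in garcs (Hstep G).
Proof.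
move=> i4 eG; rewrite Hstep_arcs; apply/allpairsP.
by exists (i, e); split; rewrite ?mem_iota.
Qed.

Lemma Hstep_arc_copy i x y : i < 4 -> x \in gverts G -> y \in gverts G -> x != y ->
  ((cv i x, cv i y) \in garcs (Hstep G)) = ((x, y) \in garcs G).
Proof.
move=> i4 xG yG xy; apply/idP/idP => [|/(copy_arc_in_Hstep i4) //].
move=> /Hstep_arcsP[j j4 [[a b] eG [Ea Eb]]].
have /andP[aG bG] := wf_arc_ends eG.
have ij := copy_vertex_pair_inj i4 j4 (wf_vert_bound xG) (wf_vert_bound yG)
  (wf_vert_bound aG) (wf_vert_bound bG) xy Ea Eb.
by subst j; rewrite (copy_vertex_inj i4 Ea) (copy_vertex_inj i4 Eb).
Qed.

Lemma Hstep_adj_copy i x y : i < 4 -> x \in gverts G -> y \in gverts G -> x != y ->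
  adj (Hstep G) (cv i x) (cv i y) = adj G x y.
Proof. by move=> i4 xG yG xy; rewrite /adj !Hstep_arc_copy // eq_sym. Qed.

Lemma Hstep_adjP u w : adj (Hstep G) u w -> exists2 i, i < 4 &
  exists x y, [/\ x \in gverts G, y \in gverts G, u = cv i x & w = cv i y].
Proof.
case/orP=> /Hstep_arcsP[i i4 [e /wf_arc_ends/andP[e1G e2G] [-> ->]]]; exists i => //.
  by exists e.1, e.2.
by exists e.2, e.1.
Qed.

Lemma Hstep_adj_internal i x w : internal G x -> adj (Hstep G) (cv i x) w ->
  exists2 y, y \in gverts G & w = cv i y.
Proof.
move=> /andP[xG x1] /Hstep_adjP[j j4 [x' [y [x'G yG Ex ->]]]]; exists y => //.
by rewrite (copy_vertex_internal_inj x1 (wf_vert_bound xG) (wf_vert_bound x'G) Ex).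
Qed.

Lemma path_in_copy i x l h : i < 4 -> internal G x -> ~~ has (fun u => u < 4) l -> h < 4 ->
  path (adj (Hstep G)) (cv i x) (rcons l h) ->
  exists2 l0, all (internal G) l0 & exists2 y, y < 2 & l = map (cv i) l0 /\ h = cv i y.
Proof.
move=> i4; elim: l x => [|u l IH] x xI /=.
  move=> _ h4; rewrite andbT => /(Hstep_adj_internal xI)[y _ Eh].
  by exists [::] => //; exists y; rewrite -?(copy_vertex_lt4 B i) -?Eh.
move=> /norP[u4 nl] h4 /andP[xu pl].
have [y yG Eu] := Hstep_adj_internal xI xu.
have yI : internal G y by rewrite /internal yG ltnNge -ltnS -(copy_vertex_lt4 B i) -Eu.
rewrite Eu in pl; have [l0 l0I [z z2 [-> ->]]] := IH y yI nl h4 pl.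
by exists (y :: l0); [rewrite /= yI | exists z; rewrite ?Eu].
Qed.

Lemma first_segment a r : a < 4 -> is_path (Hstep G) (a :: r) -> has (fun u => u < 4) r ->
  exists i s h t, [/\ i < 4, all (internal G) s, r = map (cv i) s ++ h :: t &
    (a, h) = (hub1 i, hub2 i) \/ (a, h) = (hub2 i, hub1 i)].
Proof.
move=> a4 /and4P[_ /= /andP[ar _] _ pr] /split_find[s' [h [t [Er ns' h4]]]].
have ah : a != h by apply: contraNneq ar => ->; rewrite Er mem_cat inE eqxx orbT.
move: pr; rewrite Er -cat_rcons cat_path => /andP[ps _].
suff [i i4 [s sI [x [y [x2 y2 Es Ea Eh]]]]] : exists2 i, i < 4 &
    exists2 s, all (internal G) s & exists x y,
    [/\ x < 2, y < 2, s' = map (cv i) s, a = cv i x & h = cv i y].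
  exists i, s, h, t; split; rewrite ?Er ?Es ?cat_rcons //.
  by rewrite Ea Eh; apply: copy_hub_pair; rewrite -?Ea -?Eh.
case: s' ns' ps {Er} => [_ | u s' /norP[u4 ns']] /=.
  rewrite andbT => /Hstep_adjP[i i4 [x [y [_ _ Ea Eh]]]].
  exists i => //; exists [::] => //; exists x, y.
  by split; rewrite -?(copy_vertex_lt4 B i) -?Ea -?Eh.
move=> /andP[au ps]; have [i i4 [x [y [_ yG Ea Eu]]]] := Hstep_adjP au.
have yI : internal G y by rewrite /internal yG ltnNge -ltnS -(copy_vertex_lt4 B i) -Eu.
rewrite Eu in ps; have [l0 l0I [z z2 [Es' Eh]]] := path_in_copy i4 yI ns' h4 ps.
exists i => //; exists (y :: l0); first by rewrite /= yI.
by exists x, z; split; rewrite -?(copy_vertex_lt4 B i) -?Ea -?Eh ?Es' ?Eu.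
Qed.

Lemma copy_internal_neq_hub i x h : internal G x -> h < 4 -> (cv i x == h) = false.
Proof.
move=> /andP[_ x1] h4; apply: contraTF h4 => /eqP <-.
by rewrite copy_vertex_lt4 -leqNgt.
Qed.

Lemma mem_copy_internal i j x s : i < 4 -> j < 4 -> internal G x -> all (internal G) s ->
  (cv i x \in map (cv j) s) = (i == j) && (x \in s).
Proof.
move=> i4 j4 /andP[xG x1] /allP sI; apply/mapP/andP => [[y ys E] | [/eqP <- xs]].
  have /andP[yG _] := sI y ys.
  have ij := copy_vertex_internal_inj x1 (wf_vert_bound xG) (wf_vert_bound yG) E.
  by subst j; rewrite eqxx (copy_vertex_inj i4 E).
by exists x.
Qed.

Lemma forward_arcs_copy i x q : i < 4 -> uniq (x :: q) -> {subset x :: q <= gverts G} ->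
  forward_arcs (Hstep G) (map (cv i) (x :: q)) = forward_arcs G (x :: q).
Proof.
move=> i4; elim: q x => [|y q IH] x // /andP[xq uq] qG.
have xy : x != y by apply: contraNneq xq => ->; rewrite inE eqxx.
rewrite map_cons -map_cons !forward_arcs_cons Hstep_arc_copy ?qG ?inE ?eqxx ?orbT //.
by rewrite IH // => z zq; apply: qG; rewrite inE zq orbT.
Qed.

Lemma path_copy i x q : i < 4 -> uniq (x :: q) -> {subset x :: q <= gverts G} ->
  path (adj (Hstep G)) (cv i x) (map (cv i) q) = path (adj G) x q.
Proof.
move=> i4; elim: q x => [|y q IH] x // /andP[xq uq] qG.
have xy : x != y by apply: contraNneq xq => ->; rewrite inE eqxx.
rewrite /= Hstep_adj_copy ?qG ?inE ?eqxx ?orbT // IH // => z zq.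
by apply: qG; rewrite inE zq orbT.
Qed.

Lemma nice_copy i q p : i < 4 -> 0 \in q -> 1 \in q ->
  {in gverts G, forall x, (cv i x \in p) = (x \in q)} -> nice (Hstep G) p -> nice G q.
Proof.
move=> i4 q0 q1 trace [M [Medge Mcover]].
pose V := [seq cv i x | x <- gverts G].
have cvK := copy_vertexK B i4.
have outside x : x \in gverts G -> (cv i x \in [seq v <- gverts (Hstep G) | v \notin p]) =
    (x \in [seq v <- gverts G | v \notin q]).
  by move=> xG; rewrite !mem_filter trace // xG copy_vertex_in_Hstep.
(* An M-edge at an internal vertex of copy i stays inside copy i, so pulling back the
   M-edges inside copy i gives the matching. *)
exists [seq (uncopy B i e.1, uncopy B i e.2) | e <- M & (e.1 \in V) && (e.2 \in V)]; split.
  move=> ? /mapP[e + ->]; rewrite (mem_filter _ _ M).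
  move=> /andP[/andP[/mapP[x xG E1] /mapP[y yG E2]] eM].
  have [] := Medge e eM; rewrite /= E1 E2 !cvK !outside // => ne ad xC yC.
  have xy : x != y by apply: contraNneq ne => ->.
  by rewrite -(Hstep_adj_copy i4 xG yG xy).
move=> v; rewrite mem_filter => /andP[vq vG].
have vI : internal G v by rewrite /internal vG; case: v vq {vG} => [|[|v]]; rewrite ?q0 ?q1.
pose u := cv i v.
have Vu : u \in V by apply: map_f.
have uC : u \in [seq v <- gverts (Hstep G) | v \notin p] by rewrite outside // mem_filter vq.
rewrite count_map count_filter -(Mcover u uC); apply: eq_in_count => e eM /=.
have [_ ad _ _] := Medge e eM.
have pre w : w \in V -> (uncopy B i w == v) = (w == u).
  by move=> /mapP[y _ ->]; rewrite cvK (inj_eq (copy_vertex_inj (B := B) i4)).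
have nbr w w' : adj (Hstep G) w w' -> w == u -> w' \in V.
  move=> + /eqP Ew; rewrite Ew => /(Hstep_adj_internal vI)[y yG ->]; exact: map_f.
have inV : (e.1 == u) || (e.2 == u) -> (e.1 \in V) && (e.2 \in V).
  case/orP=> hit; rewrite (eqP hit) Vu ?andbT /=; first exact: nbr hit.
  by apply: (nbr e.2) hit; rewrite adj_sym.
case: (boolP ((e.1 == u) || (e.2 == u))) => [hit | miss].
  by have /andP[e1V e2V] := inV hit; rewrite e1V e2V /= andbT !pre.
apply/negbTE; apply: contra miss => /andP[+ /andP[e1V e2V]].
by rewrite !pre.
Qed.

Lemma odd_copy_segment i s pre post p : nice_paths_oddly_oriented G -> i < 4 ->
  all (internal G) s -> p = pre ++ hub1 i :: map (cv i) s ++ hub2 i :: post ->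
  is_path (Hstep G) p -> nice (Hstep G) p ->
  (forall x, internal G x -> cv i x \notin pre ++ post) ->
  odd (forward_arcs (Hstep G) (hub1 i :: rcons (map (cv i) s) (hub2 i))).
Proof.
move=> IH i4 sI Ep pP np excl; set q := 0 :: rcons s 1.
have [_ _ G0 G1] := wfG.
have Eseg : map (cv i) q = hub1 i :: rcons (map (cv i) s) (hub2 i) by rewrite /= map_rcons.
have qG : {subset q <= gverts G}.
  by move=> x; rewrite inE mem_rcons inE => /or3P[/eqP-> | /eqP-> | /(allP sI)/andP[]].
have {}Ep : p = pre ++ map (cv i) q ++ post by rewrite Ep Eseg /= cat_rcons.
have segP : is_path (Hstep G) (map (cv i) q) by rewrite Ep in pP; apply: is_path_infix pP.
have uq : uniq q by case/and4P: segP => _ /map_uniq.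
have q0 : 0 \in q by rewrite inE eqxx.
have q1 : 1 \in q by rewrite inE mem_rcons inE eqxx orbT.
rewrite -Eseg forward_arcs_copy //; apply: IH => //=.
- case/and4P: segP => _ _ _ /=; rewrite (path_copy i4 uq qG) => pq.
  by apply/and4P; split => //; apply/allP.
- by rewrite last_rcons.
apply: (nice_copy i4 q0 q1 _ np) => x xG.
rewrite Ep !mem_cat (mem_map (copy_vertex_inj i4)).
case: (boolP (x \in q)) => xq; rewrite ?orbT //= -mem_cat; apply/negbTE/excl.
by rewrite /internal xG; case: x xq {xG} => [|[|x]]; rewrite ?q0 ?q1.
Qed.

Lemma Hstep_route r : is_path (Hstep G) (0 :: r) -> last 0 r = 1 ->
  (exists2 s, all (internal G) s & r = map (cv 3) s ++ [:: 1]) \/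
  exists s1 s2 s3, [/\ all (internal G) s1, all (internal G) s2, all (internal G) s3 &
    r = map (cv 0) s1 ++ 2 :: map (cv 1) s2 ++ 3 :: map (cv 2) s3 ++ [:: 1]].
Proof.
have next a t : a < 4 -> a != 1 -> is_path (Hstep G) (a :: t) -> last a t = 1 ->
    exists i s h t', [/\ i < 4, all (internal G) s, t = map (cv i) s ++ h :: t' &
      (a, h) = (hub1 i, hub2 i) \/ (a, h) = (hub2 i, hub1 i)].
  move=> a4 a1 aP at1; apply: first_segment a4 aP _; apply/hasP; exists 1 => //.
  by move: (mem_last a t); rewrite at1 inE eq_sym (negbTE a1).
move=> pP lr; have [i [s1 [h [t [i4 s1I Er +]]]]] := next 0 r isT isT pP lr.
case: i i4 Er => [|[|[|[|//]]]] _ Er [] [] // /= Eh; subst h; last first.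
  move: pP lr; rewrite Er => /and4P[_ /andP[_ ur] _ _] /(uniq_last_nil ur) t_nil.
  by left; exists s1; rewrite ?t_nil.
have pP2 : is_path (Hstep G) (2 :: t).
  by rewrite Er -cat_cons -[2 :: t]cats0 in pP; apply: is_path_infix pP.
have lt : last 2 t = 1 by rewrite Er last_cat in lr.
have [j [s2 [h [t2 [j4 s2I Et +]]]]] := next 2 t isT isT pP2 lt.
(* Going back through the copy just traversed would revisit a hub; likewise below. *)
case: j j4 Et => [|[|[|[|//]]]] _ Et [] [] // /= Eh; subst h.
  move: pP; rewrite Er Et => /and4P[_ /= /andP[+ _] _ _].
  by rewrite !(mem_cat, inE) eqxx !orbT.
have pP3 : is_path (Hstep G) (3 :: t2).
  by rewrite Et -cat_cons -[3 :: t2]cats0 in pP2; apply: is_path_infix pP2.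
have lt2 : last 3 t2 = 1 by rewrite Et last_cat in lt.
have [k [s3 [h [t3 [k4 s3I Et2 +]]]]] := next 3 t2 isT isT pP3 lt2.
case: k k4 Et2 => [|[|[|[|//]]]] _ Et2 [] [] // /= Eh; subst h.
  move: pP2; rewrite Et Et2 => /and4P[_ /= /andP[+ _] _ _].
  by rewrite !(mem_cat, inE) eqxx !orbT.
right; exists s1, s2, s3; split => //.
move: pP3 lt2; rewrite Et2 => /and4P[_ /andP[_ ut] _ _] /(uniq_last_nil ut) t3_nil.
by rewrite Er Et Et2 t3_nil.
Qed.

Lemma Hstep_nice_paths_oddly_oriented :
  nice_paths_oddly_oriented G -> nice_paths_oddly_oriented (Hstep G).
Proof.
move=> IH [//|a r] pP /= a0 lr np; rewrite /v1 in a0; subst a.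
change (odd (forward_arcs (Hstep G) (0 :: r))).
have [[s sI Er] | [s1 [s2 [s3 [s1I s2I s3I Er]]]]] := Hstep_route pP lr; subst r.
  rewrite cats1.
  by apply: (odd_copy_segment (i := 3) (pre := [::]) (post := [::]) IH _ sI _ pP np).
rewrite forward_arcs_cat forward_arcs_cat cats1 !oddD.
rewrite (odd_copy_segment (i := 0) (pre := [::])
    (post := map (cv 1) s2 ++ 3 :: map (cv 2) s3 ++ [:: 1]) IH _ s1I _ pP np) //; last first.
  by move=> x xI; rewrite !(mem_cat, inE, mem_copy_internal, copy_internal_neq_hub).
rewrite (odd_copy_segment (i := 1) (pre := 0 :: map (cv 0) s1)
    (post := map (cv 2) s3 ++ [:: 1]) IH _ s2I _ pP np) //; last first.
  by move=> x xI; rewrite !(mem_cat, inE, mem_copy_internal, copy_internal_neq_hub).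
rewrite (odd_copy_segment (i := 2) (pre := 0 :: map (cv 0) s1 ++ 2 :: map (cv 1) s2)
    (post := [::]) IH _ s3I _ pP np) //; last first.
  by move=> x xI; rewrite !(mem_cat, inE, mem_copy_internal, copy_internal_neq_hub).
by rewrite /= -catA.
Qed.

Lemma wf_Hstep : wf_graph (Hstep G).
Proof.
split; try exact: hub_in_Hstep.
- move=> u /Hstep_vertsP[u4 | [i i4 [x xG ->]]]; first by rewrite /= ltn_addr.
  exact: copy_vertex_bound (wf_vert_bound xG).
case=> u w /Hstep_arcsP[i i4 [e /wf_arc_ends/andP[e1G e2G] [-> ->]]].
by rewrite /= !copy_vertex_in_Hstep.
Qed.

End HstepStructure.

Lemma wf_H1 : wf_graph H1.
Proof.
split => //; first by move=> x; rewrite !inE => /or4P[]/eqP->.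
by move=> e; rewrite !inE => /or4P[]/eqP->.
Qed.

Lemma H1_nice_paths_oddly_oriented : nice_paths_oddly_oriented H1.
Proof.
move=> p /and4P[_ up pV pp] hp lp _.
have : size p <= 4 by have := uniq_leq_size up (allP pV).
move: up pV pp hp lp; case: p => [|a [|b [|c [|d [|e q]]]]] //=.
- by case: a => [|[|[|[|a]]]].
- by case: a => [|[|[|[|a]]]]; case: b => [|[|[|[|b]]]].
- by case: a => [|[|[|[|a]]]]; case: b => [|[|[|[|b]]]]; case: c => [|[|[|[|c]]]].
by case: a => [|[|[|[|a]]]]; case: b => [|[|[|[|b]]]]; case: c => [|[|[|[|c]]]];
  case: d => [|[|[|[|d]]]].
Qed.

Lemma H_wf_nice_paths_oddly_oriented g :
  1 <= g -> wf_graph (H g) /\ nice_paths_oddly_oriented (H g).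
Proof.
elim: g => [//|[_ _ | g IH _]].
  by split; [exact: wf_H1 | exact: H1_nice_paths_oddly_oriented].
have [wfG ok] := IH isT.
by split; [exact: wf_Hstep | exact: Hstep_nice_paths_oddly_oriented].
Qed.

Theorem lemma3 (g : nat) (p : seq nat) :
  1 <= g ->
  is_path (H g) p -> head 0 p = v1 -> last 0 p = v2 ->
  nice (H g) p ->
  oddly_oriented (H g) p.
Proof. by move=> /H_wf_nice_paths_oddly_oriented[_]; apply. Qed.
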